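(* Let $E_3^*$ be the greedy exponential-progression-free set defined in the context, and let $G_3^*$ be the set of positive integers $m$ such that $v_p(m)\in A_3^*$ for every prime $p\mid m$, where $A_3^*$ is the set of nonnegative integers with no digit $2$ in base $3$. Then an integer $k = p_1^{a_1}p_2^{a_2}\cdots p_n^{a_n}$ (with distinct primes $p_i$ and exponents $a_i\ge 1$) belongs to $E_3^*$ if and only if $\gcd(a_1,a_2,\dots,a_n)$ belongs to $G_3^*$.
   Context: An exponential progression is a triple $x, x^n, x^{n^2}$ with natural numbers $x, n > 1$. $E_3^*$ is constructed greedily: $1\in E_3^*$, and for $k=2,3,4,\dots$ in increasing order, $k$ is put into $E_3^*$ unless there are natural numbers $x,n>1$ with $x\in E_3^*$, $x^n\in E_3^*$ and $k = x^{n^2}$. (So $E_3^* = \{1,2,\dots,15,17,\dots,80,82,\dots\}$.) $G_3^*$ is (by Rankin) the greedy set of positive integers free of 3-term geometric progressions. *)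

From mathcomp Require Import all_boot.
Set Implicit Arguments. Unset Strict Implicit. Unset Printing Implicit Defensive.

(* Greedy construction of E_3^*, by course-of-values recursion with fuel.
   Eaux f k decides membership of k, correctly whenever f > k:
   1 is in; k >= 2 is in unless there are x, n >= 2 with x, x^n in the set
   and k = x^(n^2) (then necessarily x, n <= k, so the search is exhaustive;
   and x, x^n < k so the recursive calls are on earlier elements). *)
Fixpoint Eaux (fuel k : nat) : bool :=
  match fuel with
  | 0 => false
  | f.+1 =>
      (k == 1) ||
      ((1 < k) &&
       ~~ has (fun x => has (fun n =>
              [&& x ^ (n ^ 2) == k, Eaux f x & Eaux f (x ^ n)])
              (iota 2 k)) (iota 2 k))
  end.

Definition inE3 (k : nat) : bool := Eaux k.+1 k.

Definition inA3 (a : nat) : Prop := forall i, (a %/ 3 ^ i) %% 3 != 2.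

Definition inG3 (m : nat) : Prop :=
  0 < m /\ forall p, prime p -> p %| m -> inA3 (logn p m).

Definition gcd_exponents (k : nat) : nat :=
  \big[gcdn/0]_(p <- primes k) logn p k.

From mathcomp Require Import all_boot zify.
From Stdlib Require Import Classical.

(* Write g(k) for the gcd of the exponents of k, so that g(x^m) = m g(x) and k
   is an m-th power iff m divides g(k).  By induction, k is left out of E_3^*
   iff k = x^(n^2) with x, x^n in E_3^*, iff g(k) = e n^2 with e, e n in G_3^*.
   It remains to see that G_3^* is the greedy set free of geometric
   progressions e, e n, e n^2, which reduces prime by prime to A_3^*: adding
   numbers with ternary digits 0 and 1 produces no carries, so A_3^* has no
   3-term arithmetic progression, while any a outside A_3^* ends one, a = 2z - y
   with y < z in A_3^* obtained by replacing the digits 2 of a by 0 and by 1. *)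

Lemma inA3E a : inA3 a <-> a %% 3 != 2 /\ inA3 (a %/ 3).
Proof.
split=> [Ha | [Ha0 Ha] [|i]]; rewrite ?expn0 ?divn1 //.
- by split=> [|i]; [have := Ha 0 | have := Ha i.+1]; rewrite ?expn0 ?divn1 ?expnS ?divnMA.
- by rewrite expnS divnMA.
Qed.

Lemma inA3_0 : inA3 0.
Proof. by move=> i; rewrite div0n mod0n. Qed.

Lemma inA3_digit u r : r < 2 -> inA3 u -> inA3 (3 * u + r).
Proof.
move=> r_lt2 Hu; apply/inA3E.
have r_lt3 : r < 3 by apply: ltn_trans r_lt2 _.
rewrite mulnC modnMDl divnMDl // modn_small // divn_small // addn0.
by split=> //; apply: contraTneq r_lt2 => ->.
Qed.

Lemma sum_digits_no2 {b c e} : b %% 3 != 2 -> c %% 3 != 2 -> e %% 3 != 2 ->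
  b + e = 2 * c -> b %% 3 = c %% 3 /\ b %/ 3 + e %/ 3 = 2 * (c %/ 3).
Proof. lia. Qed.

Lemma inA3_midpoint {b c e} :
  inA3 b -> inA3 c -> inA3 e -> b + e = 2 * c -> b = c.
Proof.
elim/ltn_ind: c b e => c IHc b e /inA3E[b2 Hb] /inA3E[c2 Hc] /inA3E[e2 He] bec.
have [c0 | c_gt0] := posnP c.
  by move: bec; rewrite c0 muln0 => /eqP; rewrite addn_eq0 => /andP[/eqP].
have [mod_eq div_sum] := sum_digits_no2 b2 c2 e2 bec.
have div_eq := IHc (c %/ 3) (ltn_Pdiv (isT : 1 < 3) c_gt0) _ _ Hb Hc He div_sum.
by rewrite (divn_eq b 3) (divn_eq c 3) mod_eq div_eq.
Qed.

(* The digits 2 of [a] replaced by 0 and by 1; [fuel] must exceed the number of digits. *)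
Fixpoint a3_split fuel a : nat * nat :=
  if fuel is f.+1 then
    let: (y, z) := a3_split f (a %/ 3) in
    (3 * y + (a %% 3 == 1), 3 * z + (a %% 3 != 0))
  else (0, 0).

Lemma a3_splitP fuel a : a <= fuel ->
  let: (y, z) := a3_split fuel a in
  [/\ inA3 y, inA3 z, y + a = 2 * z, y <= z & (~ inA3 a -> y < z)].
Proof.
elim: fuel a => [|f IHf] a /=.
  by rewrite leqn0 => /eqP ->; split=> //; try exact: inA3_0; case; exact: inA3_0.
move=> a_le; have a_div : a %/ 3 <= f by lia.
have := IHf _ a_div; case: (a3_split f (a %/ 3)) => y z [Hy Hz yaz y_le Hlt].
have a_mod : a %% 3 < 3 by rewrite ltn_mod.
have a_eq := divn_eq a 3.
split; try by apply: inA3_digit; case: (a %% 3 == _).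
- by move: a_mod a_eq; case: (a %% 3) => [|[|[|]]] //= _; lia.
- by move: a_mod; case: (a %% 3) => [|[|[|]]] //= _; lia.
- move=> /inA3E Ha.
  case: (eqVneq (a %% 3) 2) => [-> | a2]; first by lia.
  have {}Hlt := Hlt (fun H => Ha (conj a2 H)).
  by case: (a %% 3 == 1); case: (a %% 3 != 0) => /=; lia.
Qed.

Definition prod_pow (v : nat -> nat) (s : seq nat) : nat := \prod_(p <- s) p ^ v p.

Lemma prod_pow_gt0 v s : all prime s -> 0 < prod_pow v s.
Proof.
rewrite /prod_pow; elim: s => [|p s IHs] /=; first by rewrite big_nil.
by case/andP=> p_pr s_pr; rewrite big_cons muln_gt0 expn_gt0 prime_gt0 ?IHs.
Qed.

Lemma logn_prod_pow v s q : uniq s -> all prime s ->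
  logn q (prod_pow v s) = if q \in s then v q else 0.
Proof.
elim: s => [|p s IHs] /=; first by rewrite /prod_pow big_nil logn1.
case/andP=> p_s s_uniq /andP[p_pr s_pr].
rewrite /prod_pow big_cons -/(prod_pow v s).
rewrite lognM ?prod_pow_gt0 ?expn_gt0 ?prime_gt0 // IHs // lognX logn_prime // in_cons.
by case: (eqVneq q p) => [-> | _] /=; rewrite ?(negbTE p_s) ?muln1 ?addn0 ?muln0.
Qed.

Lemma all_prime_primes m : all prime (primes m).
Proof. by apply/allP=> p; rewrite mem_primes => /andP[]. Qed.

Lemma logn_eq0_notin p m : p \notin primes m -> logn p m = 0.
Proof. by rewrite -logn_gt0 lt0n negbK => /eqP. Qed.

Lemma logn_prod_pow_logn (w : nat -> nat) m p : w 0 = 0 ->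
  logn p (prod_pow (fun q => w (logn q m)) (primes m)) = w (logn p m).
Proof.
move=> w0; rewrite logn_prod_pow ?primes_uniq ?all_prime_primes //.
by case: ifP => // /negbT /logn_eq0_notin ->.
Qed.

Lemma gcd_exponents_dvd k p : gcd_exponents k %| logn p k.
Proof.
have [p_k | /logn_eq0_notin -> //] := boolP (p \in primes k).
rewrite /gcd_exponents; elim: (primes k) p_k => [|q s IHs] //.
rewrite in_cons big_cons => /predU1P[-> | /IHs]; first exact: dvdn_gcdl.
exact: dvdn_trans (dvdn_gcdr _ _).
Qed.

Lemma gcd_exponentsX x m : 0 < m -> gcd_exponents (x ^ m) = m * gcd_exponents x.
Proof.
move=> m_gt0; rewrite /gcd_exponents primesX //.
elim: (primes x) => [|p s IHs]; first by rewrite !big_nil muln0.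
by rewrite !big_cons IHs lognX muln_gcdr.
Qed.

Lemma gcd_exponents_gt0 k : 1 < k -> 0 < gcd_exponents k.
Proof.
move=> k_gt1; have p_k : pdiv k \in primes k.
  by rewrite mem_primes pdiv_prime ?pdiv_dvd //; lia.
have := gcd_exponents_dvd k (pdiv k); rewrite lt0n.
by apply: contraTneq => ->; rewrite dvd0n -lt0n logn_gt0.
Qed.

Lemma root_of_dvd_gcd_exponents k m : 0 < k -> m %| gcd_exponents k ->
  exists x, k = x ^ m.
Proof.
move=> k_gt0 m_dvd; exists (prod_pow (fun q => logn q k %/ m) (primes k)).
apply: eqn_from_log => // [|p]; first by rewrite expn_gt0 prod_pow_gt0 ?all_prime_primes.
rewrite lognX (logn_prod_pow_logn (fun n => n %/ m)) ?div0n // mulnC divnK //.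
exact: dvdn_trans m_dvd (gcd_exponents_dvd k p).
Qed.

Lemma inG3_logn m : inG3 m <-> 0 < m /\ forall p, prime p -> inA3 (logn p m).
Proof.
split=> -[m_gt0 Hm]; split=> // p p_pr; last by move=> _; apply: Hm.
have [p_m | p_m] := boolP (p %| m); first exact: Hm.
by rewrite logn_eq0_notin ?mem_primes ?p_pr ?m_gt0 //; apply: inA3_0.
Qed.

Definition ends_geom_progression_in_G3 m :=
  exists e n, [/\ 1 < n, inG3 e, inG3 (e * n) & m = e * n ^ 2].

Lemma inG3_no_3GP {e n} : 1 < n -> inG3 e -> inG3 (e * n) -> ~ inG3 (e * n ^ 2).
Proof.
move=> n_gt1 /inG3_logn[e_gt0 Ge] /inG3_logn[_ Gen] /inG3_logn[_ Gen2].
have n_gt0 : 0 < n by apply: ltnW.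
have p_pr := pdiv_prime n_gt1.
have : 0 < logn (pdiv n) n by rewrite logn_gt0 mem_primes p_pr pdiv_dvd n_gt0.
have := inA3_midpoint (Ge _ p_pr) (Gen _ p_pr) (Gen2 _ p_pr).
by rewrite !lognM ?muln_gt0 ?n_gt0 //; lia.
Qed.

Definition a3_lo a := (a3_split a a).1.
Definition a3_hi a := (a3_split a a).2.

Lemma a3_lo_hiP a : [/\ inA3 (a3_lo a), inA3 (a3_hi a), a3_lo a + a = 2 * a3_hi a,
  a3_lo a <= a3_hi a & (~ inA3 a -> a3_lo a < a3_hi a)].
Proof. by rewrite /a3_lo /a3_hi; have := a3_splitP a a (leqnn a); case: a3_split. Qed.

Lemma not_inG3_split {m} : 0 < m -> ~ inG3 m -> ends_geom_progression_in_G3 m.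
Proof.
move=> m_gt0 /inG3_logn Gm.
have [p [p_pr Ap]] : exists p, prime p /\ ~ inA3 (logn p m).
  apply: NNPP => noP; apply: Gm; split=> // p p_pr.
  by apply: NNPP => Ap; apply: noP; exists p.
set e := prod_pow (fun q => a3_lo (logn q m)) (primes m).
set n := prod_pow (fun q => a3_hi (logn q m) - a3_lo (logn q m)) (primes m).
have e_gt0 : 0 < e by apply/prod_pow_gt0/all_prime_primes.
have n_gt0 : 0 < n by apply/prod_pow_gt0/all_prime_primes.
have logn_e q : logn q e = a3_lo (logn q m) by apply: logn_prod_pow_logn.
have logn_n q : logn q n = a3_hi (logn q m) - a3_lo (logn q m).
  exact: (logn_prod_pow_logn (fun a => a3_hi a - a3_lo a)).
exists e, n; split.
- have [_ _ _ _ /(_ Ap) lo_lt] := a3_lo_hiP (logn p m).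
  have : p \in primes n by rewrite -logn_gt0 logn_n subn_gt0.
  rewrite mem_primes => /and3P[_ _ /(dvdn_leq n_gt0)].
  exact: leq_trans (prime_gt1 p_pr).
- apply/inG3_logn; split=> // q _; rewrite logn_e.
  by case: (a3_lo_hiP (logn q m)).
- apply/inG3_logn; split=> [|q _]; first by rewrite muln_gt0 e_gt0.
  rewrite lognM // logn_e logn_n subnKC; by case: (a3_lo_hiP (logn q m)).
- apply: eqn_from_log => // [|q]; first by rewrite muln_gt0 e_gt0 expn_gt0 n_gt0.
  rewrite lognM ?expn_gt0 ?n_gt0 // lognX logn_e logn_n.
  by case: (a3_lo_hiP (logn q m)) => _ _ lo_hi lo_le_hi _; lia.
Qed.

Lemma inG3_greedy m : 0 < m -> inG3 m <-> ~ ends_geom_progression_in_G3 m.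
Proof.
move=> m_gt0; split=> [Gm [e [n [n_gt1 Ge Gen m_eq]]] | noGP].
  by apply: inG3_no_3GP n_gt1 Ge Gen _; rewrite -m_eq.
by apply: NNPP => /(not_inG3_split m_gt0).
Qed.

Lemma ltn_exp_sqr {x n} : 1 < x -> 1 < n -> x < x ^ n < x ^ (n ^ 2).
Proof.
by move=> x_gt1 n_gt1; rewrite -{1}(expn1 x) !ltn_exp2l // n_gt1 -{1}(expn1 n) ltn_exp2l.
Qed.

Lemma Eaux_fuel f1 f2 k : k < f1 -> k < f2 -> Eaux f1 k = Eaux f2 k.
Proof.
elim: f1 f2 k => [|f IHf] [|f'] k //= k_lt1 k_lt2.
congr (_ || (_ && ~~ _)); apply: eq_in_has => x; rewrite mem_iota => x_k.
apply: eq_in_has => n; rewrite mem_iota => n_k.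
case: eqP => //= k_eq; have /andP[x_lt xn_lt] : x < x ^ n < x ^ (n ^ 2).
  by apply: ltn_exp_sqr; lia.
by rewrite !(IHf f' x) ?(IHf f' (x ^ n)) //; lia.
Qed.

Lemma inE3_Eaux f k : k < f -> Eaux f k = inE3 k.
Proof. by move=> k_lt; apply: Eaux_fuel. Qed.

Definition ends_exp_progression_in_E3 k :=
  exists x n, [/\ 1 < x, 1 < n, inE3 x, inE3 (x ^ n) & k = x ^ (n ^ 2)].

Lemma inE3P k : 1 < k -> inE3 k <-> ~ ends_exp_progression_in_E3 k.
Proof.
move=> k_gt1; rewrite {1}/inE3 [X in X <-> _]/= gtn_eqF // k_gt1 /=.
split=> [/hasPn noGP [x [n [x_gt1 n_gt1 Ex Exn k_eq]]] | noGP].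
- have /andP[x_lt xn_lt] := ltn_exp_sqr x_gt1 n_gt1.
  have n_lt := ltn_expl n x_gt1.
  have x_in : x \in iota 2 k by rewrite mem_iota; lia.
  have n_in : n \in iota 2 k by rewrite mem_iota; lia.
  have := hasPn (noGP x x_in) n n_in.
  by rewrite k_eq eqxx !inE3_Eaux ?Ex ?Exn //; apply: ltn_trans xn_lt.
- apply/hasPn=> x; rewrite mem_iota => x_k; apply/hasPn=> n; rewrite mem_iota => n_k.
  apply/and3P=> -[/eqP k_eq Ex Exn]; apply: noGP; exists x, n.
  have /andP[x_lt xn_lt] : x < x ^ n < x ^ (n ^ 2) by apply: ltn_exp_sqr; lia.
  by split; rewrite -?(@inE3_Eaux k) //; lia.
Qed.

Section InductionStep.

Variable k : nat.
Hypothesis k_gt1 : 1 < k.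
Hypothesis IHk : forall m, m < k -> 1 < m -> inE3 m <-> inG3 (gcd_exponents m).

Lemma exp_to_geom_progression :
  ends_exp_progression_in_E3 k -> ends_geom_progression_in_G3 (gcd_exponents k).
Proof.
move=> [x [n [x_gt1 n_gt1 Ex Exn k_eq]]].
have /andP[x_lt xn_lt] := ltn_exp_sqr x_gt1 n_gt1.
have n_gt0 : 0 < n by apply: ltnW.
exists (gcd_exponents x), n; split=> //.
- by apply/(IHk x) => //; rewrite k_eq (ltn_trans x_lt).
- rewrite mulnC -gcd_exponentsX //.
  by apply/(IHk (x ^ n)) => //; rewrite ?k_eq // (ltn_trans x_gt1).
- by rewrite k_eq gcd_exponentsX ?expn_gt0 ?n_gt0 // mulnC.
Qed.

Lemma geom_to_exp_progression :
  ends_geom_progression_in_G3 (gcd_exponents k) -> ends_exp_progression_in_E3 k.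
Proof.
move=> [e [n [n_gt1 Ge Gen g_eq]]].
have n2_gt0 : 0 < n ^ 2 by rewrite expn_gt0 ltnW.
have [x k_eq] : exists x, k = x ^ (n ^ 2).
  by apply: root_of_dvd_gcd_exponents; [apply: ltnW | rewrite g_eq dvdn_mull].
have x_gt1 : 1 < x.
  by case: x k_eq => [|[|x]] // k_eq; move: k_gt1; rewrite k_eq ?exp0n ?exp1n.
have gx : gcd_exponents x = e.
  by apply/eqP; rewrite -(eqn_pmul2l n2_gt0) -gcd_exponentsX // -k_eq g_eq mulnC.
have /andP[x_lt xn_lt] := ltn_exp_sqr x_gt1 n_gt1.
exists x, n; split=> //.
- by apply/(IHk x); rewrite ?gx ?k_eq // (ltn_trans x_lt).
- apply/(IHk (x ^ n)); rewrite ?k_eq // ?(ltn_trans x_gt1) //.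
  by rewrite gcd_exponentsX ?gx 1?mulnC // ltnW.
Qed.

End InductionStep.

Theorem mainTheorem3 (k : nat) :
  1 < k -> (inE3 k <-> inG3 (gcd_exponents k)).
Proof.
elim/ltn_ind: k => k IHk k_gt1.
rewrite inE3P // inG3_greedy ?gcd_exponents_gt0 //; apply: not_iff_compat.
by split; [apply: exp_to_geom_progression | apply: geom_to_exp_progression].
Qed.
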